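(* With $f$ as in the context (and $n\ge 3$), $\langle v_0\rangle=\{x\in V : x\wedge V\subseteq Vf\}$.
   Context: Let $p$ be a prime, $\mathbb{F}=\mathrm{GF}(p)$, and $n\ge 3$. Let $V$ be an $\mathbb{F}$-vector space with basis $v_0,\dots,v_n$, $U=\langle v_1,\dots,v_n\rangle$, $W=\Lambda^2V$, and for $x\in V$, $x\wedge V=\{x\wedge y:y\in V\}$. Maps are written on the right. The linear map $f:V\to W$ is given by $v_0f=\sum_{i=1}^n b_i\, v_0\wedge v_i+\sum_{1\le j<k\le n}c_{j,k}\, v_j\wedge v_k$ and $v_if=\sum_{j=1}^n A_{i,j}\, v_0\wedge v_j$ for $1\le i\le n$, where $b\in\mathbb{F}^n$ and $c=(c_{j,k})\in\mathbb{F}^{\binom n2}$ are nonzero, and $A$ is the $n\times n$ companion matrix of the minimal polynomial over $\mathbb{F}$ of a primitive element of $\mathrm{GF}(p^n)$. *)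

From HB Require Import structures.
From mathcomp Require Import all_boot all_order all_algebra all_field.
Set Implicit Arguments. Unset Strict Implicit. Unset Printing Implicit Defensive.
Import GRing.Theory.
Local Open Scope ring_scope.

(* The n x n companion matrix of q (row convention, as mathcomp's
   [companionmx]: row i is e_(i+1) for i < n-1, last row is -coeffs of q).
   For size q = n.+1 this is exactly [companionmx q]. *)
Definition companion (F : nzRingType) (n : nat) (q : {poly F}) : 'M[F]_n :=
  \matrix_(i < n, j < n)
    if (i == n.-1 :> nat) then - q`_j else (i.+1 == j :> nat)%:R.

Definition is_minpoly (F : fieldType) (L : fieldExtType F) (z : L)
    (q : {poly F}) : Prop :=
  [/\ q \is monic, root (map_poly (in_alg L) q) z &
      forall r : {poly F}, root (map_poly (in_alg L) r) z -> q %| r].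

Definition primitive_elt (F : fieldType) (L : fieldExtType F) (z : L) : Prop :=
  forall y : L, y != 0 -> exists k : nat, y = z ^+ k.

(* V = F^(n+1) as row vectors; index 0 is v_0, index (lift ord0 i) is v_(i+1). *)
Definition basis_v (F : nzRingType) (m : nat) (i : 'I_m) : 'rV[F]_m :=
  delta_mx 0 i.
Definition v0 (F : nzRingType) (n : nat) : 'rV[F]_n.+1 := basis_v F ord0.
Definition vU (F : nzRingType) (n : nat) (i : 'I_n) : 'rV[F]_n.+1 :=
  basis_v F (lift ord0 i).

(* Concrete model of Lambda^2 V: alternating (n+1)x(n+1) matrices,
   x /\ y := x^T y - y^T x  (so v_i /\ v_j = E_ij - E_ji). *)
Definition wedge (F : comNzRingType) (m : nat) (x y : 'rV[F]_m) : 'M[F]_m :=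
  x^T *m y - y^T *m x.

(* The linear map f : V -> W of the context, with b = (b_1..b_n),
   c_(j,k) = c j k for j < k (entries with j >= k are ignored), A the n x n
   matrix: v_0 f = sum b_i v0/\v_i + sum_(j<k) c_jk v_j/\v_k,
   v_i f = sum_j A_ij v0/\v_j. *)
Definition fv0 (F : comNzRingType) (n : nat) (b : 'rV[F]_n) (c : 'M[F]_n)
  : 'M[F]_n.+1 :=
  \sum_(i < n) b 0 i *: wedge (v0 F n) (vU F i)
  + \sum_(j < n) \sum_(k < n | (j < k)%N) c j k *: wedge (vU F j) (vU F k).

Definition fvi (F : comNzRingType) (n : nat) (A : 'M[F]_n) (i : 'I_n)
  : 'M[F]_n.+1 :=
  \sum_(j < n) A i j *: wedge (v0 F n) (vU F j).

Definition fmap (F : comNzRingType) (n : nat) (b : 'rV[F]_n) (c : 'M[F]_n)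
  (A : 'M[F]_n) (x : 'rV[F]_n.+1) : 'M[F]_n.+1 :=
  x 0 ord0 *: fv0 b c + \sum_(i < n) x 0 (lift ord0 i) *: fvi A i.

From HB Require Import structures.
From mathcomp Require Import all_boot all_order all_algebra all_field.
From mathcomp Require Import ring.
Set Implicit Arguments.
Unset Strict Implicit.
Unset Printing Implicit Defensive.

(* The map f sends U onto v0 /\ U through the companion matrix A, which is
   invertible because the minimal polynomial of z has a nonzero constant
   coefficient (z generates L^x and dim L > 1, so z != 0). Hence
   v0 /\ V = v0 /\ U = Uf lies in Vf.
   Conversely, the (U /\ U)-component of any element of Vf is a multiple of
   that of v0 f, so these components span at most a line. If x has a nonzero
   U-coordinate x_m, pick i, i' distinct from m and from each other (here
   n >= 3 is used): the (m,i) and (m,i') entries of x /\ v_i and x /\ v_i' are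
   (x_m, 0) and (0, x_m), two independent vectors, a contradiction. *)

Import GRing.Theory.
Local Open Scope ring_scope.

Lemma companion_mulmx_eq0 (F : fieldType) n (q : {poly F}) (u : 'rV[F]_n) :
  q`_0 != 0 -> u *m companion n q = 0 -> u = 0.
Proof.
case: n u => [|n] u q0_neq0 uC0; first by apply/rowP => -[].
have colE (j : 'I_n.+1) :
    \sum_(i | i != ord_max) u 0 i * (i.+1 == j :> nat)%:R = u 0 ord_max * q`_j.
  move/rowP/(_ j): uC0; rewrite !mxE (bigD1 ord_max) //= mxE eqxx mulrN.
  move/eqP; rewrite addrC subr_eq0 => /eqP <-; apply: eq_bigr => i i_max.
  by rewrite mxE ifF //; exact: negPf i_max.
have umax0 : u 0 ord_max = 0.
  have := colE ord0; rewrite big1 => [/esym/eqP|i _]; last by rewrite mulr0.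
  by rewrite mulf_eq0 (negPf q0_neq0) orbF => /eqP.
apply/rowP => i; rewrite mxE; have [-> //|i_max] := eqVneq i ord_max.
have i_lt_n : (i < n)%N.
  by rewrite ltn_neqAle -ltnS ltn_ord andbT; exact: i_max.
move: (colE (inord i.+1)); rewrite umax0 mul0r (bigD1 i) //= inordK // eqxx.
rewrite mulr1 big1 ?addr0 // => k /andP[_ k_i].
by rewrite eqSS (inj_eq val_inj) (negPf k_i) mulr0.
Qed.

Lemma companion_unitmx (F : fieldType) n (q : {poly F}) :
  q`_0 != 0 -> companion n q \in unitmx.
Proof.
move=> q0_neq0; rewrite -row_free_unit -kermx_eq0; apply/eqP/row_matrixP => i.
rewrite row0; apply: (companion_mulmx_eq0 q0_neq0).
by rewrite -row_mul mulmx_ker row0.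
Qed.

Lemma primitive_elt_neq0 (F : fieldType) (L : fieldExtType F) (z : L) :
  (1 < \dim {:L})%N -> primitive_elt z -> z != 0.
Proof.
move=> dimL_gt1 z_prim; apply: contraTneq dimL_gt1 => z0.
have L_line : ({:L} <= <[1 : L]>)%VS.
  apply/subvP => y _; have [-> | y_neq0] := eqVneq y 0; first exact: mem0v.
  have [[|k] ->] := z_prim y y_neq0; first by rewrite expr0 memv_line.
  by rewrite z0 expr0n mem0v.
by rewrite -leqNgt (leq_trans (dimvS L_line)) // dim_vline oner_neq0.
Qed.

Lemma minpoly_coef0_neq0 (F : fieldType) (L : fieldExtType F) (z : L) q :
  z != 0 -> is_minpoly z q -> q`_0 != 0.
Proof.
move=> z_neq0 [q_monic qz q_min]; apply/negP => /eqP q00.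
have X_dvd_q : 'X %| q.
  by rewrite -(subr0 'X) -polyC0 -root_factor_theorem /root horner_coef0 q00.
set r := q %/ 'X; have qE : q = r * 'X by rewrite divpK.
have r_neq0 : r != 0.
  by apply: contraNneq (monic_neq0 q_monic) => r0; rewrite qE r0 mul0r.
have rz : root (map_poly (in_alg L) r) z.
  move: qz; rewrite qE rmorphM /= map_polyX rootM /root hornerX.
  by rewrite (negPf z_neq0) orbF.
by have := dvdp_leq r_neq0 (q_min _ rz); rewrite qE size_mulX // ltnn.
Qed.

Lemma card_gt2_neq (T : finType) (m : T) :
  (2 < #|T|)%N -> exists i i' : T, [/\ i != m, i' != m & i != i'].
Proof.
move=> T_gt2; have : (1 < #|[set~ m]|)%N by rewrite cardsC1 -ltnS prednK // (ltn_trans _ T_gt2).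
by case/card_gt1P => i [i'] [+ + ii']; rewrite !in_setC1 => im i'm; exists i, i'.
Qed.

Section Wedge.
Variables (F : fieldType) (m : nat).
Implicit Types x y : 'rV[F]_m.

Lemma wedgeE x y a b : wedge x y a b = x 0 a * y 0 b - y 0 a * x 0 b.
Proof. by rewrite !mxE !big_ord1 !mxE. Qed.

Fact wedge_is_linear x : linear (wedge x).
Proof. by move=> k y1 y2; apply/matrixP => a b; rewrite !(wedgeE, mxE); ring. Qed.

HB.instance Definition _ x :=
  GRing.isLinear.Build F 'rV[F]_m 'M[F]_m _ (wedge x) (wedge_is_linear x).

Lemma wedgexx x : wedge x x = 0.
Proof. by apply/matrixP => a b; rewrite wedgeE mxE mulrC subrr. Qed.

Lemma wedgeZl k x y : wedge (k *: x) y = k *: wedge x y.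
Proof. by apply/matrixP => a b; rewrite !(wedgeE, mxE); ring. Qed.

Definition wedge_sub_image (g : 'rV[F]_m -> 'M[F]_m) x :=
  forall y, exists w, wedge x y = g w.

End Wedge.

Section Coordinates.
Variables (F : fieldType) (n : nat).

Definition urow (y : 'rV[F]_n.+1) : 'rV[F]_n := \row_j y 0 (lift ord0 j).

Definition uvec (t : 'rV[F]_n) : 'rV[F]_n.+1 := \sum_(i < n) t 0 i *: vU F i.

Fact uvec_is_linear : linear uvec.
Proof.
move=> k s t; rewrite /uvec scaler_sumr -big_split /=.
by apply: eq_bigr => i _; rewrite !mxE scalerDl scalerA.
Qed.

HB.instance Definition _ :=
  GRing.isLinear.Build F 'rV[F]_n 'rV[F]_n.+1 _ uvec uvec_is_linear.

Lemma vU_liftE (i j : 'I_n) : vU F i 0 (lift ord0 j) = (j == i)%:R.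
Proof. by rewrite !mxE (inj_eq lift_inj). Qed.

Lemma uvec_v0_coord t : uvec t 0 ord0 = 0.
Proof. by rewrite summxE big1 // => i _; rewrite !mxE mulr0. Qed.

Lemma urow_uvec t : urow (uvec t) = t.
Proof.
apply/rowP => j; rewrite mxE summxE (bigD1 j) //= big1 => [|i ij].
  by rewrite !mxE !eqxx mulr1 addr0.
by rewrite !mxE (inj_eq lift_inj) eq_sym (negPf ij) andbF mulr0.
Qed.

Lemma v0_uvec_decomp (y : 'rV[F]_n.+1) :
  y = y 0 ord0 *: v0 F n + uvec (urow y).
Proof.
rewrite {1}[y]row_sum_delta big_ord_recl; congr (_ + _).
by apply: eq_bigr => i _; rewrite mxE.
Qed.

End Coordinates.

Section LinearMap.
Variables (F : fieldType) (n : nat) (b : 'rV[F]_n) (c A : 'M[F]_n).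

Lemma fviE i : fvi A i = wedge (v0 F n) (uvec (row i A)).
Proof.
rewrite /fvi /uvec linear_sum; apply: eq_bigr => j _.
by rewrite linearZ mxE.
Qed.

Lemma fmapE w :
  fmap b c A w = w 0 ord0 *: fv0 b c + wedge (v0 F n) (uvec (urow w *m A)).
Proof.
rewrite /fmap mulmx_sum_row (linear_sum (@uvec F n)) linear_sum; congr (_ + _).
by apply: eq_bigr => i _; rewrite fviE !linearZ mxE.
Qed.

Lemma wedge_v0_liftE y (i j : 'I_n) :
  wedge (v0 F n) y (lift ord0 i) (lift ord0 j) = 0.
Proof. by rewrite wedgeE !mxE !mul0r mulr0 subrr. Qed.

Lemma fmap_liftE w (i j : 'I_n) :
  fmap b c A w (lift ord0 i) (lift ord0 j) =
  w 0 ord0 * fv0 b c (lift ord0 i) (lift ord0 j).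
Proof. by rewrite fmapE [LHS]mxE mxE wedge_v0_liftE addr0. Qed.

Lemma v0_wedge_sub_image a :
  A \in unitmx -> wedge_sub_image (fmap b c A) (a *: v0 F n).
Proof.
move=> A_unit y; exists (uvec (a *: urow y *m invmx A)).
rewrite fmapE uvec_v0_coord scale0r add0r urow_uvec mulmxKV // !linearZ /=.
rewrite wedgeZl {1}[y]v0_uvec_decomp (linearD (wedge (v0 F n))) linearZ /=.
by rewrite wedgexx scaler0 add0r.
Qed.

Lemma wedge_sub_image_coordU x (m i i' : 'I_n) :
  i != m -> i' != m -> i != i' ->
  wedge_sub_image (fmap b c A) x -> x 0 (lift ord0 m) = 0.
Proof.
move=> im i'm ii' xW.
pose K (j : 'I_n) := fv0 b c (lift ord0 m) (lift ord0 j).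
have entryE j k w : j != m -> wedge x (vU F j) = fmap b c A w ->
    x 0 (lift ord0 m) * (k == j)%:R = w 0 ord0 * K k.
  move=> jm /(congr1 (fun M : 'M[F]_n.+1 => M (lift ord0 m) (lift ord0 k))).
  rewrite fmap_liftE wedgeE !vU_liftE (eq_sym m) (negPf jm).
  by rewrite mul0r subr0.
have [w1 E1] := xW (vU F i); have [w2 E2] := xW (vU F i').
have := entryE _ i _ im E1; have := entryE _ i' _ im E1.
have := entryE _ i' _ i'm E2.
rewrite !eqxx (eq_sym i') (negPf ii') !mulr1 mulr0 => e22 /esym/eqP.
rewrite mulf_eq0 => /orP[/eqP-> | /eqP Ki'0]; first by rewrite mul0r.
by rewrite e22 Ki'0 mulr0.
Qed.

Lemma wedge_sub_image_v0 x :
  (2 < n)%N -> wedge_sub_image (fmap b c A) x -> exists a, x = a *: v0 F n.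
Proof.
move=> n_gt2 xW; exists (x 0 ord0).
suff urow0 : urow x = 0 by rewrite {1}[x]v0_uvec_decomp urow0 linear0 addr0.
apply/rowP => m; rewrite !mxE.
have [|i [i' [im i'm ii']]] := card_gt2_neq m; first by rewrite card_ord.
exact: wedge_sub_image_coordU im i'm ii' xW.
Qed.

End LinearMap.

Theorem lemma3p2 (p n : nat) (p_prime : prime p) (n_ge3 : (3 <= n)%N)
  (b : 'rV['F_p]_n) (c : 'M['F_p]_n)
  (L : fieldExtType 'F_p) (z : L) (q : {poly 'F_p}) :
  b != 0 ->
  (exists j k : 'I_n, (j < k)%N /\ c j k != 0) ->
  \dim {:L} = n ->
  primitive_elt z ->
  is_minpoly z q ->
  forall x : 'rV['F_p]_n.+1,
    (exists a : 'F_p, x = a *: v0 'F_p n) <->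
    (forall y : 'rV['F_p]_n.+1,
       exists w : 'rV['F_p]_n.+1, wedge x y = fmap b c (companion n q) w).
Proof.
move=> _ _ dimL z_prim q_min x.
have z_neq0 : z != 0 by apply: primitive_elt_neq0 z_prim; rewrite dimL ltnW.
have A_unit := companion_unitmx n (minpoly_coef0_neq0 z_neq0 q_min).
split => [[a ->] | xW]; first exact: v0_wedge_sub_image.
exact: wedge_sub_image_v0.
Qed.
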